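(* Let $\mathcal{X}$ be a subcategory of $\mathcal{C}$ closed under extensions and CoCones, and let $\mathcal{W}$ be an $\mathcal{X}$-injective cogenerator for $\mathcal{X}$. Then $\widehat{\mathcal{X}}$ is closed under direct summands: if $C_1\oplus C_2\in\widehat{\mathcal{X}}$ then $C_1,C_2\in\widehat{\mathcal{X}}$.
   Context: $\mathcal{C}=(\mathcal{C},\mathbb{E},\mathfrak{s})$ is an extriangulated category (in the sense of Nakaoka–Palu) with enough projectives and enough injectives; a conflation realizing $\delta\in\mathbb{E}(C,A)$ is written as an $\mathbb{E}$-triangle $A\to B\to C\dashrightarrow$. All subcategories (here, $\mathcal{X}$ and $\mathcal{W}$) are full, additive, closed under isomorphisms and direct summands. Higher extensions: $\mathbb{E}^1=\mathbb{E}$, $\mathbb{E}^{i+1}(X,Y)=\mathbb{E}(X,\Sigma^iY)\cong\mathbb{E}(\Omega^iX,Y)$. $\mathcal{X}$ is extension-closed if for every $\mathbb{E}$-triangle $A\to B\to C\dashrightarrow$ with $A,C\in\mathcal{X}$ one has $B\in\mathcal{X}$; closed under CoCones if for every such $\mathbb{E}$-triangle with $B,C\in\mathcal{X}$ one has $A\in\mathcal{X}$. $\mathcal{W}$ is an $\mathcal{X}$-injective cogenerator for $\mathcal{X}$ if $\mathcal{W}\subseteq\mathcal{X}$, for each $X\in\mathcal{X}$ there is an $\mathbb{E}$-triangle $X\to W\to X'\dashrightarrow$ with $W\in\mathcal{W}$, $X'\in\mathcal{X}$, and $\mathbb{E}^i(X,W)=0$ for all $X\in\mathcal{X}$, $W\in\mathcal{W}$,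 $i\ge1$. For $n\ge0$, $\widehat{\mathcal{X}}_n$ is the class of objects $C$ for which there exist $\mathbb{E}$-triangles $K_{i+1}\to X_i\to K_i\dashrightarrow$ ($0\le i\le n-1$) with $K_0=C$, all $X_i\in\mathcal{X}$ and $K_n\in\mathcal{X}$; $\widehat{\mathcal{X}}=\bigcup_n\widehat{\mathcal{X}}_n$. *)

From HB Require Import structures.
From mathcomp Require Import all_boot all_algebra.
Set Implicit Arguments. Unset Strict Implicit. Unset Printing Implicit Defensive.
Import GRing.Theory.
Local Open Scope ring_scope.

(*   realizes d x y  <->  [A -x-> B -y-> C] belongs to the class s(d). *)
Record ExtriData := {
  Obj : Type;
  Hom : Obj -> Obj -> zmodType;
  comp : forall A B C : Obj, Hom B C -> Hom A B -> Hom A C;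
  idm : forall A : Obj, Hom A A;
  Ext : Obj -> Obj -> zmodType;                 (* Ext C A = E(C,A) *)
  push : forall (C A A' : Obj), Hom A A' -> Ext C A -> Ext C A';
  pull : forall (C' C A : Obj), Hom C' C -> Ext C A -> Ext C' A;
  realizes : forall (A B C : Obj), Ext C A -> Hom A B -> Hom B C -> Prop
}.

Arguments comp {D A B C} : rename.
Arguments idm {D} A : rename.
Arguments push {D C A A'} : rename.
Arguments pull {D C' C A} : rename.
Arguments realizes {D A B C} : rename.

Section ExtriDefs.
Variable D : ExtriData.
Local Notation Obj := (@Obj D).
Local Notation Hom := (@Hom D).
Local Notation Ext := (@Ext D).
Local Notation "f \oo g" := (comp f g) (at level 40, left associativity).

Definition is_iso (A B : Obj) (f : Hom A B) : Prop :=
  exists g : Hom B A, g \oo f = idm A /\ f \oo g = idm B.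

Definition isomorphic (A B : Obj) : Prop := exists f : Hom A B, is_iso f.

Definition is_biprod (A B S : Obj) (iA : Hom A S) (iB : Hom B S)
    (pA : Hom S A) (pB : Hom S B) : Prop :=
  [/\ pA \oo iA = idm A, pB \oo iB = idm B, pA \oo iB = 0, pB \oo iA = 0
    & iA \oo pA + iB \oo pB = idm S].

Definition is_zero_obj (Z : Obj) : Prop := idm Z = 0.

Definition seq_equiv (A B B' C : Obj) (x : Hom A B) (y : Hom B C)
    (x' : Hom A B') (y' : Hom B' C) : Prop :=
  exists b : Hom B B', [/\ is_iso b, b \oo x = x' & y' \oo b = y].

Definition conflation (A B C : Obj) (x : Hom A B) (y : Hom B C) : Prop :=
  exists d : Ext C A, realizes d x y.

Definition conf_obj (A B C : Obj) : Prop :=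
  exists (x : Hom A B) (y : Hom B C), conflation x y.

Definition ext_dsum (A A' AA C C' CC : Obj)
    (iA : Hom A AA) (iA' : Hom A' AA) (pC : Hom CC C) (pC' : Hom CC C')
    (d : Ext C A) (d' : Ext C' A') : Ext CC AA :=
  push iA (pull pC d) + push iA' (pull pC' d').

Record ExtriAxioms : Prop := {
  comp_assoc : forall (A B C E : Obj) (f : Hom C E) (g : Hom B C) (h : Hom A B),
      f \oo (g \oo h) = (f \oo g) \oo h;
  comp_id_l : forall (A B : Obj) (f : Hom A B), idm B \oo f = f;
  comp_id_r : forall (A B : Obj) (f : Hom A B), f \oo idm A = f;
  comp_addl : forall (A B C : Obj) (f f' : Hom B C) (g : Hom A B),
      (f + f') \oo g = f \oo g + f' \oo g;
  comp_addr : forall (A B C : Obj) (f : Hom B C) (g g' : Hom A B),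
      f \oo (g + g') = f \oo g + f \oo g';
  has_zero_obj : exists Z : Obj, is_zero_obj Z;
  has_biprod : forall A B : Obj, exists (S : Obj) (iA : Hom A S) (iB : Hom B S)
      (pA : Hom S A) (pB : Hom S B), is_biprod iA iB pA pB;
  push_addE : forall (C A A' : Obj) (a : Hom A A') (d d' : Ext C A),
      push a (d + d') = push a d + push a d';
  push_addH : forall (C A A' : Obj) (a a' : Hom A A') (d : Ext C A),
      push (a + a') d = push a d + push a' d;
  push_id : forall (C A : Obj) (d : Ext C A), push (idm A) d = d;
  push_comp : forall (C A A' A'' : Obj) (a : Hom A A') (a' : Hom A' A'')
      (d : Ext C A), push (a' \oo a) d = push a' (push a d);
  pull_addE : forall (C' C A : Obj) (c : Hom C' C) (d d' : Ext C A),
      pull c (d + d') = pull c d + pull c d';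
  pull_addH : forall (C' C A : Obj) (c c' : Hom C' C) (d : Ext C A),
      pull (c + c') d = pull c d + pull c' d;
  pull_id : forall (C A : Obj) (d : Ext C A), pull (idm C) d = d;
  pull_comp : forall (C'' C' C A : Obj) (c : Hom C' C) (c' : Hom C'' C')
      (d : Ext C A), pull (c \oo c') d = pull c' (pull c d);
  push_pull : forall (C' C A A' : Obj) (a : Hom A A') (c : Hom C' C)
      (d : Ext C A), push a (pull c d) = pull c (push a d);
  (* s(d) is exactly one equivalence class of sequences *)
  real_exists : forall (A C : Obj) (d : Ext C A),
      exists (B : Obj) (x : Hom A B) (y : Hom B C), realizes d x y;
  real_class : forall (A B B' C : Obj) (d : Ext C A) (x : Hom A B) (y : Hom B C)
      (x' : Hom A B') (y' : Hom B' C),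
      realizes d x y -> (realizes d x' y' <-> seq_equiv x y x' y');
  real_morph : forall (A B C A' B' C' : Obj) (d : Ext C A) (d' : Ext C' A')
      (x : Hom A B) (y : Hom B C) (x' : Hom A' B') (y' : Hom B' C')
      (a : Hom A A') (c : Hom C C'),
      realizes d x y -> realizes d' x' y' -> push a d = pull c d' ->
      exists b : Hom B B', b \oo x = x' \oo a /\ y' \oo b = c \oo y;
  real_zero : forall (A C S : Obj) (iA : Hom A S) (iC : Hom C S)
      (pA : Hom S A) (pC : Hom S C),
      is_biprod iA iC pA pC -> realizes (0 : Ext C A) iA pC;
  real_dsum : forall (A B C A' B' C' AA BB CC : Obj)
      (d : Ext C A) (d' : Ext C' A')
      (x : Hom A B) (y : Hom B C) (x' : Hom A' B') (y' : Hom B' C')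
      (iA : Hom A AA) (iA' : Hom A' AA) (pA : Hom AA A) (pA' : Hom AA A')
      (iB : Hom B BB) (iB' : Hom B' BB) (pB : Hom BB B) (pB' : Hom BB B')
      (iC : Hom C CC) (iC' : Hom C' CC) (pC : Hom CC C) (pC' : Hom CC C'),
      realizes d x y -> realizes d' x' y' ->
      is_biprod iA iA' pA pA' -> is_biprod iB iB' pB pB' ->
      is_biprod iC iC' pC pC' ->
      realizes (ext_dsum iA iA' pC pC' d d')
        (iB \oo x \oo pA + iB' \oo x' \oo pA') (iC \oo y \oo pB + iC' \oo y' \oo pB');
  ET3 : forall (A B C A' B' C' : Obj) (d : Ext C A) (d' : Ext C' A')
      (x : Hom A B) (y : Hom B C) (x' : Hom A' B') (y' : Hom B' C')
      (a : Hom A A') (b : Hom B B'),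
      realizes d x y -> realizes d' x' y' -> b \oo x = x' \oo a ->
      exists c : Hom C C', c \oo y = y' \oo b /\ push a d = pull c d';
  ET3op : forall (A B C A' B' C' : Obj) (d : Ext C A) (d' : Ext C' A')
      (x : Hom A B) (y : Hom B C) (x' : Hom A' B') (y' : Hom B' C')
      (b : Hom B B') (c : Hom C C'),
      realizes d x y -> realizes d' x' y' -> y' \oo b = c \oo y ->
      exists a : Hom A A', b \oo x = x' \oo a /\ push a d = pull c d';
  ET4 : forall (A B C Dd F : Obj) (d : Ext Dd A) (d' : Ext F B)
      (f : Hom A B) (f' : Hom B Dd) (g : Hom B C) (g' : Hom C F),
      realizes d f f' -> realizes d' g g' ->
      exists (E : Obj) (dm : Hom Dd E) (e : Hom E F) (h' : Hom C E)
        (d'' : Ext E A),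
        [/\ realizes (push f' d') dm e,
            realizes d'' (g \oo f) h',
            h' \oo g = dm \oo f',
            e \oo h' = g'
          & (pull dm d'' = d /\ push f d'' = pull e d')];
  ET4op : forall (Dd A B F C : Obj) (d : Ext B Dd) (d' : Ext C F)
      (f' : Hom Dd A) (f : Hom A B) (g' : Hom F B) (g : Hom B C),
      realizes d f' f -> realizes d' g' g ->
      exists (E : Obj) (dm : Hom Dd E) (e : Hom E F) (h' : Hom E A)
        (d'' : Ext C E),
        [/\ realizes (pull g' d) dm e,
            realizes d'' h' (g \oo f),
            h' \oo dm = f',
            f \oo h' = g' \oo e
          & (d' = push e d'' /\ push dm d = pull g d'')]
}.

Definition projective (P : Obj) : Prop :=
  forall (A B C : Obj) (x : Hom A B) (y : Hom B C) (c : Hom P C),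
    conflation x y -> exists b : Hom P B, y \oo b = c.

Definition injective (I : Obj) : Prop :=
  forall (A B C : Obj) (x : Hom A B) (y : Hom B C) (a : Hom A I),
    conflation x y -> exists b : Hom B I, b \oo x = a.

Definition enough_projectives : Prop :=
  forall C : Obj, exists (A P : Obj), projective P /\ conf_obj A P C.

Definition enough_injectives : Prop :=
  forall A : Obj, exists (I C : Obj), injective I /\ conf_obj A I C.

(* n-th cosyzygies: cosyz n Y K iff K = Sigma^n Y for some choice of
   conflations  K_j -> I_j -> K_{j+1}  with I_j injective and K_0 = Y *)
Inductive cosyz : nat -> Obj -> Obj -> Prop :=
  | cosyz0 : forall Y, cosyz 0 Y Y
  | cosyzS : forall n Y K I K', cosyz n Y K -> injective I ->
      conf_obj K I K' -> cosyz n.+1 Y K'.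

(* E^{i+1}(X,Y) = E(X, Sigma^i Y) = 0 *)
Definition higher_ext_zero (i : nat) (X Y : Obj) : Prop :=
  forall K : Obj, cosyz i.-1 Y K -> forall e : Ext X K, e = 0.

Definition subcategory (P : Obj -> Prop) : Prop :=
  [/\
      (forall A B : Obj, isomorphic A B -> P A -> P B),
      (exists Z : Obj, is_zero_obj Z /\ P Z),
      (forall (A B S : Obj) (iA : Hom A S) (iB : Hom B S) (pA : Hom S A)
         (pB : Hom S B), is_biprod iA iB pA pB -> P A -> P B -> P S)
    &
      (forall (A B S : Obj) (iA : Hom A S) (iB : Hom B S) (pA : Hom S A)
         (pB : Hom S B), is_biprod iA iB pA pB -> P S -> P A /\ P B)].

Definition extension_closed (P : Obj -> Prop) : Prop :=
  forall A B C : Obj, conf_obj A B C -> P A -> P C -> P B.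

Definition closed_under_CoCones (P : Obj -> Prop) : Prop :=
  forall A B C : Obj, conf_obj A B C -> P B -> P C -> P A.

Definition injective_cogenerator (X W : Obj -> Prop) : Prop :=
  [/\ (forall A, W A -> X A),
      (forall A, X A -> exists Wo X' : Obj, [/\ W Wo, X X' & conf_obj A Wo X'])
    & (forall (i : nat) (A B : Obj), (1 <= i)%N -> X A -> W B ->
         higher_ext_zero i A B)].

Fixpoint Xhat_n (X : Obj -> Prop) (n : nat) (C : Obj) : Prop :=
  match n with
  | 0 => X C
  | n'.+1 => exists K X0 : Obj, [/\ X X0, Xhat_n X n' K & conf_obj K X0 C]
  end.

Definition Xhat (X : Obj -> Prop) (C : Obj) : Prop := exists n, Xhat_n X n C.

End ExtriDefs.

From Pilot Require Import Defs.
From HB Require Import structures.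
From mathcomp Require Import all_boot all_algebra.
Set Implicit Arguments. Unset Strict Implicit. Unset Printing Implicit Defensive.
Import GRing.Theory.
Local Open Scope ring_scope.

(* We show by induction on n that each \hat{X}_n is closed under direct
   summands.  Let K -> X0 -> C1 (+) C2 be a conflation realizing d, with
   K in \hat{X}_n and X0 in X.  Pulling d back along the two inclusions
   ((ET4)^op) gives conflations K -> E_i -> C_i realizing i_i^* d together with
   E_i -> X0 -> C_j (j <> i).  The direct sum K (+) K -> E1 (+) E2 -> C1 (+) C2
   pushed out along the codiagonal K (+) K -> K is d again, so (ET4) yields a
   conflation K -> E1 (+) E2 -> F with F isomorphic to X0.  As \hat{X}_n is
   closed under extensions of objects of X by objects of \hat{X}_n, the sum
   E1 (+) E2, hence by induction E1 and E2, lies in \hat{X}_n, and then the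
   conflations E_i -> X0 -> C_j put C1 and C2 in \hat{X}_{n+1}. *)

Lemma double_eq0 (V : zmodType) (x : V) : x + x = x -> x = 0.
Proof. by move=> h; apply: (addrI x); rewrite h addr0. Qed.

Section ExtriangulatedTheory.
Variable D : ExtriData.
Hypothesis HD : ExtriAxioms D.
Local Notation Obj := (@Obj D).
Local Notation Hom := (@Defs.Hom D).
Local Notation Ext := (@Defs.Ext D).
Local Notation "f \oo g" := (Defs.comp f g) (at level 40, left associativity).
Local Notation cA := (comp_assoc HD).
Local Notation cil := (comp_id_l HD).
Local Notation cir := (comp_id_r HD).

Lemma comp0l (A B C : Obj) (g : Hom A B) : (0 : Hom B C) \oo g = 0.
Proof. by apply: double_eq0; rewrite -comp_addl // addr0. Qed.

Lemma comp0r (A B C : Obj) (f : Hom B C) : f \oo (0 : Hom A B) = 0.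
Proof. by apply: double_eq0; rewrite -comp_addr // addr0. Qed.

Lemma compBl (A B C : Obj) (f f' : Hom B C) (g : Hom A B) :
  (f - f') \oo g = f \oo g - f' \oo g.
Proof.
have compNl : (- f') \oo g = - (f' \oo g).
  by apply/eqP; rewrite -addr_eq0 addrC -comp_addl // addrN comp0l.
by rewrite comp_addl // compNl.
Qed.

Lemma compBr (A B C : Obj) (f : Hom B C) (g g' : Hom A B) :
  f \oo (g - g') = f \oo g - f \oo g'.
Proof.
have compNr : f \oo (- g') = - (f \oo g').
  by apply/eqP; rewrite -addr_eq0 addrC -comp_addr // addrN comp0r.
by rewrite comp_addr // compNr.
Qed.

Lemma push0E (C A A' : Obj) (a : Hom A A') : push a (0 : Ext C A) = 0.
Proof. by apply: double_eq0; rewrite -push_addE // addr0. Qed.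

Lemma pull0E (C' C A : Obj) (c : Hom C' C) : pull c (0 : Ext C A) = 0.
Proof. by apply: double_eq0; rewrite -pull_addE // addr0. Qed.

Lemma pull0H (C' C A : Obj) (d : Ext C A) : pull (0 : Hom C' C) d = 0.
Proof. by apply: double_eq0; rewrite -pull_addH // addr0. Qed.

Lemma pullNH (C' C A : Obj) (c : Hom C' C) (d : Ext C A) : pull (- c) d = - pull c d.
Proof. by apply/eqP; rewrite -addr_eq0 addrC -pull_addH // addrN pull0H. Qed.

Lemma biprod_zero_r (Z U : Obj) : is_zero_obj Z ->
  is_biprod (idm U) (0 : Hom Z U) (idm U) (0 : Hom U Z).
Proof. by move=> hZ; split; rewrite ?cil ?comp0l ?comp0r // addr0. Qed.

Lemma biprod_zero_l (Z U : Obj) : is_zero_obj Z ->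
  is_biprod (0 : Hom Z U) (idm U) (0 : Hom U Z) (idm U).
Proof. by move=> hZ; split; rewrite ?cil ?comp0l ?comp0r // add0r. Qed.

Lemma biprod_swap (A B S : Obj) (iA : Hom A S) (iB : Hom B S) pA pB :
  is_biprod iA iB pA pB -> is_biprod iB iA pB pA.
Proof. by case=> h1 h2 h3 h4 h5; split=> //; rewrite addrC. Qed.

Lemma biprod_cancel (A B S : Obj) (iA : Hom A S) (iB : Hom B S) pA pB :
  is_biprod iA iB pA pB ->
  [/\ (forall Z (h : Hom Z A), pA \oo (iA \oo h) = h),
      (forall Z (h : Hom Z B), pB \oo (iB \oo h) = h),
      (forall Z (h : Hom Z B), pA \oo (iB \oo h) = 0)
    & (forall Z (h : Hom Z A), pB \oo (iA \oo h) = 0)].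
Proof. by case=> h1 h2 h3 h4 _; split=> Z h; rewrite cA ?h1 ?h2 ?h3 ?h4 ?cil ?comp0l. Qed.

Lemma biprod_antidiagonal (K KK : Obj) (j1 j2 : Hom K KK) q1 q2 :
  is_biprod j1 j2 q1 q2 -> is_biprod (j1 - j2) j2 q1 (q1 + q2).
Proof.
case=> h1 h2 h3 h4 h5; split=> //.
- by rewrite compBr h1 h3 subr0.
- by rewrite comp_addl // h2 h3 add0r.
- by rewrite compBr !comp_addl // h1 h2 h3 h4 addr0 add0r subrr.
- by rewrite comp_addr // compBl addrA subrK.
Qed.

Lemma biprod_injective (I1 I2 J : Obj) (k1 : Hom I1 J) (k2 : Hom I2 J) r1 r2 :
  is_biprod k1 k2 r1 r2 -> Defs.injective I1 -> Defs.injective I2 -> Defs.injective J.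
Proof.
move=> [_ _ _ _ h5] hI1 hI2 A B C x y a hc.
have [b1 hb1] := hI1 _ _ _ x y (r1 \oo a) hc.
have [b2 hb2] := hI2 _ _ _ x y (r2 \oo a) hc.
exists (k1 \oo b1 + k2 \oo b2).
by rewrite comp_addl // -!cA hb1 hb2 !cA -comp_addl // h5 cil.
Qed.

Lemma iso_of_inverses (A B : Obj) (c : Hom A B) (L R : Hom B A) :
  L \oo c = idm A -> c \oo R = idm B -> is_iso c.
Proof.
move=> hL hR; exists R; split=> //.
by have -> : R = L by rewrite -(cil R) -hL -cA hR cir.
Qed.

Lemma unipotent_iso (C : Obj) (phi : Hom C C) :
  (phi - idm C) \oo (phi - idm C) = 0 -> is_iso phi.
Proof.
set psi := phi - idm C => hp.
have phiE : phi = psi + idm C by rewrite /psi subrK.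
exists (idm C - psi); rewrite phiE; split.
- by rewrite comp_addr // !cir compBl cil hp subr0 addrC subrK.
- by rewrite comp_addl // !cil compBr cir hp subr0 addrC subrK.
Qed.

Lemma push_inflation (A B C : Obj) (d : Ext C A) (x : Hom A B) (y : Hom B C) :
  realizes d x y -> push x d = 0.
Proof.
move=> hd; have [S [iA [iC [pA [pC hb]]]]] := has_biprod HD B C.
have [c [_ ->]] := ET3 HD (a := x) (b := iA) hd (real_zero HD hb) erefl.
exact: pull0E.
Qed.

Lemma realizes0_split (A B C : Obj) (x : Hom A B) (y : Hom B C) :
  realizes (0 : Ext C A) x y -> exists (iC : Hom C B) (pA : Hom B A), is_biprod x iC pA y.
Proof.
move=> hd; have [S [iA [iC [pA [pC hb]]]]] := has_biprod HD A C.
have [b [[g [hgb hbg]] hx hy]] := (real_class HD x y (real_zero HD hb)).1 hd.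
case: hb => h1 h2 h3 h4 h5.
have ygE : y = pC \oo g by rewrite -hy -cA hbg cir.
exists (b \oo iC), (pA \oo g); split.
- by rewrite -hx cA -(cA pA g b) hgb cir h1.
- by rewrite cA hy h2.
- by rewrite cA -(cA pA g b) hgb cir h3.
- by rewrite -hx cA hy h4.
- rewrite ygE -hx !cA -(cA b iA pA) -(cA b iC pC) -comp_addl // -comp_addr //.
  by rewrite h5 cir.
Qed.

Lemma injective_conflation0 (I P C : Obj) (d : Ext C I) (x : Hom I P) (y : Hom P C) :
  Defs.injective I -> realizes d x y -> d = 0.
Proof.
move=> hI hd; have [r hr] := hI _ _ _ x y (idm I) (ex_intro _ d hd).
by rewrite -(push_id HD d) -hr push_comp // (push_inflation hd) push0E.
Qed.

Lemma factor_through_deflation (A B C C' : Obj) (d : Ext C A) (x : Hom A B)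
  (y : Hom B C) (c : Hom C' C) :
  realizes d x y -> pull c d = 0 -> exists s : Hom C' B, c = y \oo s.
Proof.
move=> hd hc; have [S [iA [iC [pA [pC hb]]]]] := has_biprod HD A C'.
have hc0 : push (idm A) 0 = pull c d by rewrite push0E hc.
have [b [_ hyb]] := real_morph HD (real_zero HD hb) hd hc0.
exists (b \oo iC); case: hb => _ h2 _ _ _.
by rewrite cA hyb -cA h2 cir.
Qed.

Lemma cone_endo_iso (A B C : Obj) (d : Ext C A) (x : Hom A B) (y : Hom B C)
  (phi : Hom C C) :
  realizes d x y -> phi \oo y = y -> pull phi d = d -> is_iso phi.
Proof.
move=> hd hy hphi; apply: unipotent_iso.
have hp : pull (phi - idm C) d = 0 by rewrite pull_addH // pullNH pull_id // hphi subrr.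
have [s hs] := factor_through_deflation hd hp.
by rewrite {2}hs cA compBl hy cil subrr comp0l.
Qed.

Lemma cone_unique (A B C C' : Obj) (d : Ext C A) (d' : Ext C' A) (x : Hom A B)
  (y : Hom B C) (y' : Hom B C') :
  realizes d x y -> realizes d' x y' -> isomorphic C C'.
Proof.
move=> hd hd'.
have hx : idm B \oo x = x \oo idm A by rewrite cil cir.
have [c [hc1 hc2]] := ET3 HD hd hd' hx.
have [c' [hc1' hc2']] := ET3 HD hd' hd hx.
rewrite push_id // in hc2; rewrite push_id // in hc2'.
rewrite cir in hc1; rewrite cir in hc1'.
have [L [hL _]] := cone_endo_iso (phi := c' \oo c) hd
  ltac:(by rewrite -cA hc1 hc1') ltac:(by rewrite pull_comp // -hc2' -hc2).
have [R [_ hR]] := cone_endo_iso (phi := c \oo c') hd'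
  ltac:(by rewrite -cA hc1' hc1) ltac:(by rewrite pull_comp // -hc2 -hc2').
exists c; apply: (iso_of_inverses (L := L \oo c') (R := c' \oo R)).
- by rewrite -cA.
- by rewrite cA.
Qed.

Lemma realizes_middle_iso (A B B' C : Obj) (d : Ext C A) (x : Hom A B) (y : Hom B C)
  (x' : Hom A B') (y' : Hom B' C) :
  realizes d x y -> realizes d x' y' -> isomorphic B B'.
Proof. by move=> hd hd'; have [b [hb _ _]] := (real_class HD x' y' hd).1 hd'; exists b. Qed.

Lemma conf_middle_iso (A B B' C : Obj) :
  conf_obj A B C -> isomorphic B B' -> conf_obj A B' C.
Proof.
move=> [x [y [d hd]]] [b [g [hgb hbg]]].
exists (b \oo x), (y \oo g), d.
apply/(real_class HD _ _ hd); exists b; split=> //; first by exists g.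
by rewrite -cA hgb cir.
Qed.

Lemma dsum_identity_left (U A' B' C' T S : Obj) (k1 : Hom U T) (k2 : Hom A' T) r1 r2
  (j1 : Hom U S) (j2 : Hom B' S) q1 q2 (d : Ext C' A') (x : Hom A' B') (y : Hom B' C') :
  is_biprod k1 k2 r1 r2 -> is_biprod j1 j2 q1 q2 -> realizes d x y ->
  exists d' : Ext C' T, realizes d' (j1 \oo r1 + j2 \oo x \oo r2) (y \oo q2).
Proof.
move=> hT hS hd; have [Z hZ] := has_zero_obj HD.
have := real_dsum HD (real_zero HD (biprod_zero_r U hZ)) hd hT hS (biprod_zero_l C' hZ).
by rewrite cir !comp0l add0r cil => h; exists (ext_dsum k1 k2 (0 : Hom C' Z) (idm C') 0 d).
Qed.

Lemma dsum_identity_right (K X1 A B P BB : Obj) (d : Ext A K) (x : Hom K X1)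
  (y : Hom X1 A) (iA : Hom A P) (iB : Hom B P) pA pB (jX : Hom X1 BB) (jB : Hom B BB) qX qB :
  realizes d x y -> is_biprod iA iB pA pB -> is_biprod jX jB qX qB -> conf_obj K BB P.
Proof.
move=> hd hP hBB; have [Z hZ] := has_zero_obj HD.
have := real_dsum HD hd (real_zero HD (biprod_zero_l B hZ)) (biprod_zero_r K hZ) hBB hP.
by move=> h; do 3 eexists; exact: h.
Qed.

(* Half of the pushout construction: for conflations A -x1-> B1 and
   A -x2-> B2 -> C2, the inflation [x1; x2] : A -> B1 (+) B2 has a cone E
   sitting in a conflation B1 -> E -> C2. *)
Lemma inflation_sum_cone (A B1 B2 C2 S : Obj) (d2 : Ext C2 A) (x2 : Hom A B2)
  (y2 : Hom B2 C2) (x1 : Hom A B1) (j1 : Hom B1 S) (j2 : Hom B2 S) q1 q2 :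
  realizes d2 x2 y2 -> is_biprod j1 j2 q1 q2 ->
  exists (E : Obj) (y : Hom S E) (d : Ext E A),
    realizes d (j1 \oo x1 + j2 \oo x2) y /\ conf_obj B1 E C2.
Proof.
move=> hd hS; have [T [k1 [k2 [r1 [r2 hT]]]]] := has_biprod HD B1 A.
have [e11 e22 e12 e21] := biprod_cancel hT.
(* B1 (+) A is also the biproduct of B1 and A along the graph of x1 *)
have hgraph : is_biprod (k1 \oo x1 + k2) k1 r2 (r1 - x1 \oo r2).
  case: hT => h1 h2 h3 h4 h5; split=> //.
  - by rewrite comp_addr // cA h4 comp0l add0r h2.
  - by rewrite compBl h1 -cA h4 comp0r subr0.
  - rewrite compBl !comp_addr // e11 h3 -!cA e21 h2 comp0r cir.
    by rewrite addr0 add0r subrr.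
  - by rewrite comp_addl // compBr -cA addrC addrA addrNK.
have [d' hd'] := dsum_identity_left hT hS hd.
have [E [dm [e [y [d [hE1 hE2 _ _ _]]]]]] := ET4 HD (real_zero HD hgraph) hd'.
exists E, y, d; split; last by do 3 eexists; exact: hE1.
move: hE2; congr (realizes _ _ _).
case: (hT) => h1 h2 h3 h4 h5.
rewrite comp_addr // !comp_addl // -!cA e11 e21 h3 h2.
by rewrite !comp0r !cir addr0 add0r.
Qed.

Lemma pushout_conf (A B1 C1 B2 C2 : Obj) :
  conf_obj A B1 C1 -> conf_obj A B2 C2 ->
  exists P, conf_obj B1 P C2 /\ conf_obj B2 P C1.
Proof.
move=> [x1 [y1 [d1 hd1]]] [x2 [y2 [d2 hd2]]].
have [S [j1 [j2 [q1 [q2 hS]]]]] := has_biprod HD B1 B2.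
have [E [y [d [hE c1]]]] := inflation_sum_cone x1 hd2 hS.
have [E' [y' [d' [hE' c2]]]] := inflation_sum_cone x2 hd1 (biprod_swap hS).
rewrite addrC in hE'.
by exists E; split=> //; apply: conf_middle_iso c2 (cone_unique hE' hE).
Qed.

Lemma ext_exact_middle (B P C' X : Obj) (b : Ext C' B) (x : Hom B P) (y : Hom P C')
  (e : Ext X P) :
  realizes b x y -> push y e = 0 -> exists e', e = push x e'.
Proof.
move=> hb he; have [N [u [v hu]]] := real_exists HD e.
have [E [dm [e' [h [d [h1 _ _ _ [_ h6]]]]]]] := ET4 HD hb hu.
rewrite he in h1; have [iC [pA [_ h2 _ _ _]]] := realizes0_split h1.
by exists (pull iC d); rewrite push_pull // h6 -pull_comp // h2 pull_id.
Qed.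

Lemma injective_pushout (A B C I SA : Obj) :
  conf_obj A B C -> Defs.injective I -> conf_obj A I SA ->
  exists (P : Obj) (x : Hom I P) (iC : Hom C P) (pI : Hom P I) (y : Hom P C)
    (b : Hom B P) (c : Hom P SA) (e : Ext SA B),
    is_biprod x iC pI y /\ realizes e b c.
Proof.
move=> hc hI hcI.
have [P [[b [c [e he]]] [x [y [d hd]]]]] := pushout_conf hc hcI.
have d0 := injective_conflation0 hI hd; rewrite d0 in hd.
have [iC [pI hP]] := realizes0_split hd.
by exists P, x, iC, pI, y, b, c, e.
Qed.

Lemma pullback_conf (K A B F C : Obj) (d : Ext B K) (f' : Hom K A) (f : Hom A B)
  (d' : Ext C F) (g' : Hom F B) (g : Hom B C) :
  realizes d f' f -> realizes d' g' g ->
  exists (E : Obj) (x : Hom K E) (y : Hom E F), realizes (pull g' d) x y /\ conf_obj E A C.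
Proof.
move=> hd hd'; have [E [x [y [h [d'' [h1 h2 _ _ _]]]]]] := ET4op HD hd hd'.
by exists E, x, y; split=> //; do 3 eexists; exact: h2.
Qed.

Lemma ext_dsum_codiagonal (K KK C1 C2 S : Obj) (j1 j2 : Hom K KK) q1 q2
  (i1 : Hom C1 S) (i2 : Hom C2 S) p1 p2 (d : Ext S K) :
  is_biprod j1 j2 q1 q2 -> is_biprod i1 i2 p1 p2 ->
  push (q1 + q2) (ext_dsum j1 j2 p1 p2 (pull i1 d) (pull i2 d)) = d.
Proof.
case=> k1 k2 k3 k4 _ [_ _ _ _ b5].
rewrite /ext_dsum push_addE // -!push_comp // !comp_addl // k1 k2 k3 k4.
by rewrite addr0 add0r !push_id // -!pull_comp // -pull_addH // b5 pull_id.
Qed.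

Lemma codiagonal_conf (K X0 C1 C2 S E1 E2 M : Obj) (d : Ext S K)
  (f' : Hom K X0) (f : Hom X0 S) (i1 : Hom C1 S) (i2 : Hom C2 S) p1 p2
  (m1 : Hom E1 M) (m2 : Hom E2 M) n1 n2
  (x1 : Hom K E1) (y1 : Hom E1 C1) (x2 : Hom K E2) (y2 : Hom E2 C2) :
  is_biprod i1 i2 p1 p2 -> is_biprod m1 m2 n1 n2 -> realizes d f' f ->
  realizes (pull i1 d) x1 y1 -> realizes (pull i2 d) x2 y2 ->
  exists F, isomorphic X0 F /\ conf_obj K M F.
Proof.
move=> hS hM hd h1 h2.
have [KK [j1 [j2 [q1 [q2 hKK]]]]] := has_biprod HD K K.
have hsum := real_dsum HD h1 h2 hKK hM hS.
have hsplit := real_zero HD (biprod_antidiagonal hKK).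
have [F [dm [e [h [d' [hF hKMF _ _ _]]]]]] := ET4 HD hsplit hsum.
rewrite (ext_dsum_codiagonal d hKK hS) in hF.
exists F; split; first exact: realizes_middle_iso hd hF.
by do 3 eexists; exact: hKMF.
Qed.

Lemma cosyz0_inv (Y K : Obj) : cosyz 0 Y K -> K = Y.
Proof. by move=> h; inversion h. Qed.

Lemma cosyz_cons (j : nat) (C I C1 K : Obj) :
  Defs.injective I -> conf_obj C I C1 -> cosyz j C1 K -> cosyz j.+1 C K.
Proof.
move=> hI hc h; elim: h hc => [Y|n Y K0 I' K' _ IH hI' hc'] hc.
- exact: cosyzS (cosyz0 C) hI hc.
- exact: cosyzS (IH hc) hI' hc'.
Qed.

Lemma cosyz_dest (j : nat) (C K : Obj) :
  cosyz j.+1 C K -> exists I C1, [/\ Defs.injective I, conf_obj C I C1 & cosyz j C1 K].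
Proof.
move eq_m : j.+1 => m h; elim: h j eq_m => // n Y K0 I' K' h0 IH hI' hc' j [->].
case: n h0 IH => [|n] h0 IH.
- rewrite (cosyz0_inv h0) in hc'; exists I', K'; split=> //; exact: cosyz0.
- have [I1 [C1 [hi hc h]]] := IH n erefl.
  by exists I1, C1; split=> //; exact: cosyzS h hI' hc'.
Qed.

Section Resolutions.
Variables X W : Obj -> Prop.
Hypothesis Hinj : enough_injectives D.
Hypothesis HXsub : subcategory X.
Hypothesis HXext : extension_closed X.
Hypothesis HXcoc : closed_under_CoCones X.
Hypothesis HW : injective_cogenerator X W.

(* E^{j+1}(X, Z) = E(X, Sigma^j Z) vanishes for every object X of X. *)
Definition X_ext_vanishes (j : nat) (Z : Obj) : Prop :=
  forall K, cosyz j Z K -> forall Xo, X Xo -> forall e : Ext Xo K, e = 0.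

Definition X_acyclic (Z : Obj) : Prop := forall j, X_ext_vanishes j Z.

Lemma X_acyclic_cosyzygy (Z I Z' : Obj) :
  X_acyclic Z -> Defs.injective I -> conf_obj Z I Z' -> X_acyclic Z'.
Proof. by move=> hZ hI hc j K hK; apply: (hZ j.+1); exact: cosyz_cons hI hc hK. Qed.

(* The proof
   is by induction on the degree j, pushing out along an injective inflation
   A -> I -> Sigma A: this gives B -> I (+) C -> Sigma A, with B and Sigma A
   acyclic. *)
Lemma X_acyclic_cone (A B C : Obj) :
  conf_obj A B C -> X_acyclic A -> X_acyclic B -> X_acyclic C.
Proof.
move=> + + + j; elim: j A B C => [|j IH] A B C hc hA hB.
all: have [IA [SA [hIA hcA]]] := Hinj A.
all: have hSA := X_acyclic_cosyzygy hA hIA hcA.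
all: have [P [x [iC [pI [y [b [c [be [hP hbe]]]]]]]]] := injective_pushout hc hIA hcA.
- (* E(X,C) is a summand of E(X,P), squeezed between E(X,B) = 0 and E(X,SA) = 0 *)
  move=> K /cosyz0_inv -> Xo hXo e.
  have hiC : push iC e = 0.
    have [e' ->] := ext_exact_middle (e := push iC e) hbe (hSA 0%N SA (cosyz0 SA) Xo hXo _).
    by rewrite (hB 0%N B (cosyz0 B) Xo hXo e') push0E.
  case: hP => _ h2 _ _ _.
  by rewrite -(push_id HD e) -h2 push_comp // hiC push0E.
- (* shift degree: C -> I -> C1 induces P -> IA (+) I -> C1, and (ET4) gives
     Sigma A -> E -> C1 with E a cosyzygy of B *)
  move=> K /cosyz_dest [I [C1 [hI [g [h [ga hga]]] hK1]]].
  have [J [k1 [k2 [r1 [r2 hJ]]]]] := has_biprod HD IA I.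
  have [d hd] := dsum_identity_left hP hJ hga.
  have [E [dm [e [h' [d' [h1 h2 _ _ _]]]]]] := ET4 HD hbe hd.
  have hE : X_acyclic E.
    by apply: X_acyclic_cosyzygy hB (biprod_injective hJ hIA hI) _; do 3 eexists; exact: h2.
  by apply: (IH SA E C1 _ hSA hE K hK1); do 3 eexists; exact: h1.
Qed.

Lemma W_acyclic (B : Obj) : W B -> X_acyclic B.
Proof. by case: HW => _ _ hW hB j K hK Xo hXo; exact: (hW j.+1 Xo B isT hXo hB K hK). Qed.

Lemma What_acyclic (n : nat) (H : Obj) : Xhat_n W n H -> X_acyclic H.
Proof.
elim: n H => [|n IH] H; first exact: W_acyclic.
by move=> [K [W0 [hW0 hK hc]]]; apply: X_acyclic_cone hc (IH _ hK) (W_acyclic hW0).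
Qed.

Lemma What_sub_Xhat (n : nat) (H : Obj) : Xhat_n W n H -> Xhat_n X n H.
Proof.
case: HW => hWX _ _; elim: n H => [|n IH] H /=; first exact: hWX.
by move=> [K [W0 [hW0 hK hc]]]; exists K, W0; split=> //; [exact: hWX | exact: IH].
Qed.

Lemma Xhat_n_sum_X (n : nat) (A B P : Obj) (iA : Hom A P) (iB : Hom B P) pA pB :
  is_biprod iA iB pA pB -> Xhat_n X n A -> X B -> Xhat_n X n P.
Proof.
case: HXsub => _ _ hbp _.
case: n => [|n] hP /=; first exact: hbp hP.
move=> [K [X1 [hX1 hK [x [y [d hd]]]]]] hB.
have [BB [jX [jB [qX [qB hBB]]]]] := has_biprod HD X1 B.
exists K, BB; split=> //; first exact: hbp hBB hX1 hB.
exact: dsum_identity_right hd hP hBB.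
Qed.

Lemma Xhat_n_cocone_X (n : nat) (M P X2 : Obj) :
  conf_obj M P X2 -> Xhat_n X n P -> X X2 -> Xhat_n X n M.
Proof.
case: n => [|n] hc /=; first exact: HXcoc hc.
move=> [K [X1 [hX1 hK [f' [f [d hd]]]]]] hX2.
have [g' [g [d' hd']]] := hc.
have [E [x [y [h [d'' [h1 h2 _ _ _]]]]]] := ET4op HD hd hd'.
exists K, E; split=> //; last by do 3 eexists; exact: h1.
by apply: HXcoc hX1 hX2; do 3 eexists; exact: h2.
Qed.

Lemma Xhat_n_What_envelope (n : nat) (K : Obj) : Xhat_n X n K ->
  exists H X2, [/\ Xhat_n W n H, X X2 & conf_obj K H X2].
Proof.
case: HW => _ hcog _.
elim: n K => [|n IH] K /=; first exact: hcog.
move=> [K0 [X1 [hX1 hK0 hc]]].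
have [H0 [X0 [hH0 hX0 hc0]]] := IH _ hK0.
have [P [cXP [f [f' [d hd]]]]] := pushout_conf hc hc0.
have [WP [X' [hWP hX' [g [g' [d' hd']]]]]] := hcog _ (HXext cXP hX1 hX0).
have [E [dm [e [h' [d'' [h1 h2 _ _ _]]]]]] := ET4 HD hd hd'.
exists E, X'; split=> //; last by do 3 eexists; exact: h1.
by exists H0, WP; split=> //; do 3 eexists; exact: h2.
Qed.

(* \hat{X}_n is closed under extensions of objects of X by objects of \hat{X}_n:
   pushing K -> M -> X0 out along the preenvelope K -> H gives a conflation
   H -> P -> X0 that splits because E(X0, H) = 0, so P = H (+) X0, and M is a
   CoCone of P -> X2. *)
Lemma Xhat_n_extension_X (n : nat) (K M X0 : Obj) :
  conf_obj K M X0 -> Xhat_n X n K -> X X0 -> Xhat_n X n M.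
Proof.
move=> hc hK hX0.
have [H [X2 [hH hX2 hc']]] := Xhat_n_What_envelope hK.
have [P [cMP [x [y [e he]]]]] := pushout_conf hc hc'.
rewrite (What_acyclic hH (cosyz0 H) hX0 e) in he.
have [iC [pA hb]] := realizes0_split he.
exact: Xhat_n_cocone_X cMP (Xhat_n_sum_X hb (What_sub_Xhat hH) hX0) hX2.
Qed.

Lemma Xhat_n_summands (n : nat) (C1 C2 S : Obj) (i1 : Hom C1 S) (i2 : Hom C2 S) p1 p2 :
  is_biprod i1 i2 p1 p2 -> Xhat_n X n S -> Xhat_n X n C1 /\ Xhat_n X n C2.
Proof.
case: HXsub => hiso _ _ hsum.
elim: n C1 C2 S i1 i2 p1 p2 => [|m IH] C1 C2 S i1 i2 p1 p2 hb /=; first exact: hsum hb.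
move=> [K [X0 [hX0 hK [f' [f [d hd]]]]]].
have [E1 [x1 [y1 [hE1 cE1]]]] := pullback_conf hd (real_zero HD hb).
have [E2 [x2 [y2 [hE2 cE2]]]] := pullback_conf hd (real_zero HD (biprod_swap hb)).
have [M [m1 [m2 [n1 [n2 hM]]]]] := has_biprod HD E1 E2.
have [F [hF cKMF]] := codiagonal_conf hb hM hd hE1 hE2.
have hMm : Xhat_n X m M := Xhat_n_extension_X cKMF hK (hiso _ _ hF hX0).
have [hE1m hE2m] := IH _ _ _ _ _ _ _ hM hMm.
by split; [exists E2, X0 | exists E1, X0].
Qed.

End Resolutions.

End ExtriangulatedTheory.

Theorem proposition3p14 (D : ExtriData) (HD : ExtriAxioms D)
  (Hproj : enough_projectives D) (Hinj : enough_injectives D)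
  (X W : Obj D -> Prop)
  (HXsub : subcategory X) (HWsub : subcategory W)
  (HXext : extension_closed X) (HXcoc : closed_under_CoCones X)
  (HW : injective_cogenerator X W)
  (C1 C2 S : Obj D) (i1 : @Defs.Hom D C1 S) (i2 : @Defs.Hom D C2 S) (p1 : @Defs.Hom D S C1)
  (p2 : @Defs.Hom D S C2) :
  is_biprod i1 i2 p1 p2 -> Xhat X S -> Xhat X C1 /\ Xhat X C2.
Proof.
move=> hb [n hS].
have [h1 h2] := Xhat_n_summands HD Hinj HXsub HXext HXcoc HW hb hS.
by split; exists n.
Qed.
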